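(* Assume (P1) and (A3). Then for every $q\in\mathbb{R}^n$ and every $p=(p_1,\dots,p_N)$ with $p_i\in\mathbb{R}^n$, the linear system $$\sum_{j=0}^ND_{ij}X_j-A_iX_i=p_i\ (1\le i\le N),\qquad X_0=q,$$ has a unique solution $X_0,\dots,X_N\in\mathbb{R}^n$, and it satisfies $$\|X_j\|_\infty\le 4\|p\|_\infty+2\|q\|_\infty,\qquad 0\le j\le N,$$ where for vectors $\|\cdot\|_\infty$ denotes the maximum absolute entry (for $p$, over all $nN$ entries).
   Context: Radau collocation data: for an integer $N\ge 2$, let $-1<\tau_1<\dots<\tau_N=1$ be the nodes of the $N$-point Gauss–Radau quadrature rule on $[-1,1]$ with fixed node $+1$, and set $\tau_0=-1$. For $0\le j\le N$ let $L_j(\tau)=\prod_{i=0,i\ne j}^{N}\frac{\tau-\tau_i}{\tau_j-\tau_i}$ and let $D$ be the $N\times(N+1)$ matrix $D_{ij}=L_j'(\tau_i)$, $1\le i\le N$, $0\le j\le N$; $D_{1:N}$ denotes the $N\times N$ submatrix formed by columns $1,\dots,N$. For a matrix, $\|\cdot\|_\infty$ is the largest absolute row sum. (P1): $D_{1:N}$ is invertible and $\|D_{1:N}^{-1}\|_\infty\le 2$. Here $f:\mathbb{R}^n\times\mathbb{R}^m\to\mathbb{R}^n$ is continuously differentiable, $(x^*,u^* )$ is a given continuous state–control pair on $[-1,1]$, and $A_i=\nabla_xf(x^*(\tau_i),u^*(\tau_i))$ is the $n\times n$ Jacobian. (A3): $\|\nabla_xf(x^*(t),u^*(t))\|_\infty\le1/4$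 and $\|\nabla_xf(x^*(t),u^*(t))^{\mathsf T}\|_\infty\le1/4$ for all $t\in[-1,1]$. *)

From HB Require Import structures.
From mathcomp Require Import all_boot all_order all_algebra.
Set Implicit Arguments. Unset Strict Implicit. Unset Printing Implicit Defensive.
Import Order.TTheory GRing.Theory Num.Theory.
Local Open Scope ring_scope.

Section Defs.
Variable R : realFieldType.

(* exact value of int_{-1}^{1} t^k dt *)
Definition mono_int (k : nat) : R := (1 - (-1) ^+ k.+1) / (k.+1)%:R.

(* int_{-1}^{1} p(t) dt for a polynomial p *)
Definition poly_int (p : {poly R}) : R :=
  \sum_(k < size p) p`_k * mono_int k.

(* tau : 'I_N.+1 -> R, tau 0 = -1 (the extra node), tau 1 .. tau N are the
   N-point Gauss-Radau nodes with fixed node +1: strictly increasing, tau N = 1,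
   and there are weights making the rule exact for all polynomials of degree
   <= 2N-2 (the defining property of the N-point Radau rule). *)
Definition radau_nodes (N : nat) (tau : 'I_N.+1 -> R) : Prop :=
  [/\ tau ord0 = -1, tau ord_max = 1,
      (forall i j : 'I_N.+1, (i < j)%N -> tau i < tau j) &
      exists w : 'I_N -> R, forall p : {poly R}, (size p <= (2 * N).-1)%N ->
        \sum_(i < N) w i * p.[tau (lift ord0 i)] = poly_int p].

Definition lagr (N : nat) (tau : 'I_N.+1 -> R) (j : 'I_N.+1) : {poly R} :=
  \prod_(i < N.+1 | i != j) (('X - (tau i)%:P) * ((tau j - tau i)^-1)%:P).

(* D_{ij} = L_j'(tau_i), 1 <= i <= N (row i : 'I_N stands for node i+1) *)
Definition radauD (N : nat) (tau : 'I_N.+1 -> R) : 'M[R]_(N, N.+1) :=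
  \matrix_(i < N, j < N.+1) ((lagr tau j)^`()).[tau (lift ord0 i)].

Definition radauD1N (N : nat) (tau : 'I_N.+1 -> R) : 'M[R]_N :=
  \matrix_(i < N, j < N) radauD tau i (lift ord0 j).

Definition mxnorm_inf (m k : nat) (A : 'M[R]_(m, k)) : R :=
  \big[Num.max/0]_(i < m) \sum_(j < k) `|A i j|.

Definition vnorm_inf (n : nat) (v : 'cV[R]_n) : R :=
  \big[Num.max/0]_(i < n) `|v i 0|.

Definition blocknorm_inf (N n : nat) (p : 'I_N -> 'cV[R]_n) : R :=
  \big[Num.max/0]_(i < N) vnorm_inf (p i).

End Defs.

From HB Require Import structures.
From mathcomp Require Import all_boot all_order all_algebra.
From mathcomp Require Import zify lra.
Set Implicit Arguments. Unset Strict Implicit. Unset Printing Implicit Defensive.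
Import Order.TTheory GRing.Theory Num.Theory.
Local Open Scope ring_scope.

(* The Lagrange basis sums to 1, so every row of D sums to 0 and D_{i0} q can
   be written as -\sum_{j>=1} D_{ij} q.  Componentwise the system then reads
   D_{1:N} (X_j - q)_j = p + A X, and inverting D_{1:N} gives
   max_j |X_j| <= |q| + c (|p| + alpha max_j |X_j|) with c = 2 bounding
   D_{1:N}^{-1} and alpha = 1/4 bounding A; this is the estimate because
   c alpha < 1.  For q = 0, p = 0 it forces X = 0, which gives uniqueness and,
   the system being square, existence. *)

Section LagrangeBasis.
Variables (R : realFieldType) (N : nat) (tau : 'I_N.+1 -> R).
Hypothesis tau_inj : injective tau.

Lemma horner_lagr j k : (lagr tau j).[tau k] = (k == j)%:R.
Proof.
rewrite /lagr horner_prod.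
have [->|nkj] := eqVneq k j.
  rewrite big1 // => i ij; rewrite hornerM hornerXsubC hornerC mulfV //.
  by rewrite subr_eq0; apply: contra_neq ij => /tau_inj.
by rewrite (bigD1 k) //= hornerM hornerXsubC subrr !mul0r.
Qed.

Lemma size_lagr j : size (lagr tau j) = N.+1.
Proof.
have size_factor i : i != j ->
    size (('X - (tau i)%:P) * ((tau j - tau i)^-1)%:P) = 2%N.
  move=> ij; rewrite mulrC mul_polyC size_scale ?size_XsubC // invr_eq0 subr_eq0.
  by apply: contra_neq ij => /tau_inj.
rewrite /lagr size_prod => [|i /size_factor]; last by rewrite -size_poly_gt0 => ->.
rewrite (eq_bigr (fun=> 2%N)) // sum_nat_const cardC1 card_ord /=; lia.
Qed.

Lemma sum_lagr : \sum_j lagr tau j = 1.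
Proof.
apply/eqP; rewrite -subr_eq0; apply/eqP.
apply: (@roots_geq_poly_eq0 _ _ [seq tau k | k <- enum 'I_N.+1]).
- apply/allP => _ /mapP [k _ ->]; rewrite /root hornerD hornerN horner_sum hornerC.
  rewrite (bigD1 k) //= big1 => [|i ik]; last by rewrite horner_lagr eq_sym (negbTE ik).
  by rewrite horner_lagr eqxx addr0 subrr.
- by rewrite map_inj_uniq ?enum_uniq.
rewrite size_map size_enum_ord; apply: (leq_trans (size_polyD _ _)).
rewrite geq_max size_polyN size_poly1 andbT; apply: (leq_trans (size_sum _ _ _)).
by apply/bigmax_leqP => j _; rewrite size_lagr.
Qed.

Lemma sum_horner_deriv_lagr x : \sum_j (lagr tau j)^`().[x] = 0.
Proof. by rewrite -horner_sum -raddf_sum sum_lagr /= -polyC1 derivC horner0. Qed.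

End LagrangeBasis.

Lemma radauD_row_sum (R : realFieldType) (N : nat) (tau : 'I_N.+1 -> R) :
  injective tau -> forall i, \sum_j radauD tau i j = 0.
Proof.
by move=> tau_inj i; under eq_bigr do rewrite mxE; exact: sum_horner_deriv_lagr.
Qed.

Lemma radau_nodes_mono (R : realFieldType) (N : nat) (tau : 'I_N.+1 -> R) :
  radau_nodes tau -> {mono tau : i j / (i <= j)%O >-> i <= j}.
Proof. by case=> _ _ tau_lt _; apply: le_mono. Qed.

Lemma radau_node_bounds (R : realFieldType) (N : nat) (tau : 'I_N.+1 -> R) k :
  radau_nodes tau -> -1 <= tau k <= 1.
Proof.
move=> nodes; have mono := radau_nodes_mono nodes; case: nodes => t0 tN _ _.
by rewrite -t0 -tN !mono le0x lex1.
Qed.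

Lemma radau_nodes_inj (R : realFieldType) (N : nat) (tau : 'I_N.+1 -> R) :
  radau_nodes tau -> injective tau.
Proof. by move/radau_nodes_mono/inc_inj. Qed.

Section InfinityNorms.
Variable R : realFieldType.

Lemma vnorm_inf_ge0 k (v : 'cV[R]_k) : 0 <= vnorm_inf v.
Proof. exact: bigmax_ge_id. Qed.

Lemma le_vnorm_inf k (v : 'cV[R]_k) a : `|v a 0| <= vnorm_inf v.
Proof. exact: le_bigmax. Qed.

Lemma vnorm_inf_le k (v : 'cV[R]_k) c :
  0 <= c -> (forall a, `|v a 0| <= c) -> vnorm_inf v <= c.
Proof. by move=> c_ge0 v_le; apply: bigmax_le. Qed.

Lemma vnorm_inf_le0 k (v : 'cV[R]_k) : vnorm_inf v <= 0 -> v = 0.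
Proof.
move=> v_le0; apply/colP => a; apply/eqP; rewrite mxE -normr_le0.
exact: le_trans (le_vnorm_inf v a) v_le0.
Qed.

Lemma vnorm_inf0 k : vnorm_inf (0 : 'cV[R]_k) = 0.
Proof.
by apply/le_anti; rewrite vnorm_inf_ge0 andbT vnorm_inf_le // => a; rewrite mxE normr0.
Qed.

Lemma mxnorm_inf_ge0 m k (A : 'M[R]_(m, k)) : 0 <= mxnorm_inf A.
Proof. exact: bigmax_ge_id. Qed.

Lemma vnorm_inf_mulmx m k (A : 'M[R]_(m, k)) (v : 'cV[R]_k) :
  vnorm_inf (A *m v) <= mxnorm_inf A * vnorm_inf v.
Proof.
apply: vnorm_inf_le => [|a]; first by rewrite mulr_ge0 ?mxnorm_inf_ge0 ?vnorm_inf_ge0.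
rewrite mxE; apply: le_trans (ler_norm_sum _ _ _) _.
apply: (@le_trans _ _ (\sum_b `|A a b| * vnorm_inf v)).
  by apply: ler_sum => b _; rewrite normrM ler_wpM2l ?le_vnorm_inf.
rewrite -mulr_suml ler_wpM2r ?vnorm_inf_ge0 //.
by rewrite /mxnorm_inf; apply: le_bigmax.
Qed.

Lemma blocknorm_inf_ge0 N n (p : 'I_N -> 'cV[R]_n) : 0 <= blocknorm_inf p.
Proof. exact: bigmax_ge_id. Qed.

Lemma le_blocknorm_inf N n (p : 'I_N -> 'cV[R]_n) i :
  vnorm_inf (p i) <= blocknorm_inf p.
Proof. by rewrite /blocknorm_inf; apply: le_bigmax. Qed.

Lemma blocknorm_inf0 N n : blocknorm_inf (fun _ : 'I_N => (0 : 'cV[R]_n)) = 0.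
Proof.
apply/le_anti; rewrite blocknorm_inf_ge0 andbT.
by apply: bigmax_le => // i _; rewrite vnorm_inf0.
Qed.

End InfinityNorms.

Lemma linear_ker0_surj (K : fieldType) (vT : vectType K) (f : {linear vT -> vT}) :
  (forall v, f v = 0 -> v = 0) -> forall w, exists v, f v = w.
Proof.
move=> ker0 w; have f_inj : lker (linfun f) == 0%VS.
  apply/lker0P => u v; rewrite !lfunE /= => /eqP; rewrite -subr_eq0 -raddfB /=.
  by move/eqP/ker0/eqP; rewrite subr_eq0 => /eqP.
by exists ((linfun f)^-1%VF w); rewrite -[f _]lfunE lker0_lfunVK.
Qed.

Section Collocation.
Variables (R : realFieldType) (N n : nat).
Variables (D : 'M[R]_(N, N.+1)) (A : 'I_N -> 'M[R]_n).
Implicit Types (X Y : 'I_N.+1 -> 'cV[R]_n) (q : 'cV[R]_n) (p : 'I_N -> 'cV[R]_n).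

Definition colloc_res (X : 'I_N.+1 -> 'cV[R]_n) (i : 'I_N) : 'cV[R]_n :=
  \sum_j D i j *: X j - A i *m X (lift ord0 i).

Definition colloc_sol (q : 'cV[R]_n) (p : 'I_N -> 'cV[R]_n)
    (X : 'I_N.+1 -> 'cV[R]_n) :=
  X ord0 = q /\ forall i, colloc_res X i = p i.

Definition interior_norm X := \big[Num.max/0]_(k < N) vnorm_inf (X (lift ord0 k)).

Lemma eq_colloc_res X Y : X =1 Y -> colloc_res X =1 colloc_res Y.
Proof.
by move=> eXY i; rewrite /colloc_res (eq_bigr _ (fun j _ => congr1 _ (eXY j))) eXY.
Qed.

Lemma colloc_res_scale_add k X Y i :
  colloc_res (fun j => k *: X j + Y j) i = k *: colloc_res X i + colloc_res Y i.
Proof.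
rewrite /colloc_res scalerBr scaler_sumr mulmxDr scalemxAr.
under eq_bigr do rewrite scalerDr scalerA mulrC -scalerA.
by rewrite big_split /= addrACA opprD.
Qed.

Hypothesis D_row_sum : forall i, \sum_j D i j = 0.

Let D1 : 'M[R]_N := \matrix_(i, j) D i (lift ord0 j).

Lemma colloc_res_component X a :
  D1 *m \col_k (X (lift ord0 k) a 0 - X ord0 a 0)
  = \col_i (colloc_res X i a 0 + (A i *m X (lift ord0 i)) a 0).
Proof.
apply/colP => i; rewrite !mxE subrK summxE big_ord_recl.
have := D_row_sum i; rewrite big_ord_recl => /eqP; rewrite addr_eq0 => /eqP ->.
rewrite mxE mulNr mulr_suml addrC -sumrB; apply: eq_bigr => j _.
by rewrite !mxE mulrBr.
Qed.

Variables (c alpha : R).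
Hypothesis D1_unit : D1 \in unitmx.
Hypothesis D1_inv_le : mxnorm_inf (invmx D1) <= c.
Hypothesis A_le : forall i, mxnorm_inf (A i) <= alpha.
Hypothesis alpha_ge0 : 0 <= alpha.
Hypothesis contraction : c * alpha < 1.

Lemma colloc_sol_shift_le q p X a k : colloc_sol q p X ->
  `|X (lift ord0 k) a 0 - q a 0| <= c * (blocknorm_inf p + alpha * interior_norm X).
Proof.
move=> [X0 resX].
have rhs_le : vnorm_inf (\col_i (colloc_res X i a 0 + (A i *m X (lift ord0 i)) a 0))
    <= blocknorm_inf p + alpha * interior_norm X.
  apply: vnorm_inf_le => [|i].
    by rewrite addr_ge0 ?mulr_ge0 ?blocknorm_inf_ge0 //; apply: bigmax_ge_id.
  rewrite mxE resX; apply: le_trans (ler_normD _ _) (lerD _ _).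
    exact: le_trans (le_vnorm_inf _ a) (le_blocknorm_inf p i).
  apply: le_trans (le_vnorm_inf _ a) _; apply: le_trans (vnorm_inf_mulmx _ _) _.
  apply: ler_pM; rewrite ?mxnorm_inf_ge0 ?vnorm_inf_ge0 ?A_le //.
  by rewrite /interior_norm; apply: le_bigmax.
have := colloc_res_component X a; rewrite X0 => /(congr1 (mulmx (invmx D1))).
rewrite mulKmx // => shiftE.
have := le_vnorm_inf (\col_k (X (lift ord0 k) a 0 - q a 0)) k.
rewrite mxE => /le_trans; apply.
rewrite shiftE; apply: le_trans (vnorm_inf_mulmx _ _) _.
by apply: ler_pM; rewrite ?mxnorm_inf_ge0 ?rhs_le ?D1_inv_le ?vnorm_inf_ge0.
Qed.

Lemma colloc_sol_bound q p X : colloc_sol q p X -> forall j,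
  (1 - c * alpha) * vnorm_inf (X j) <= c * blocknorm_inf p + vnorm_inf q.
Proof.
move=> solX; have X0 := solX.1.
set P := blocknorm_inf p; set Q := vnorm_inf q; set M := interior_norm X.
have P_ge0 : 0 <= P := blocknorm_inf_ge0 p.
have Q_ge0 : 0 <= Q := vnorm_inf_ge0 q.
have M_ge0 : 0 <= M by exact: bigmax_ge_id.
have c_ge0 : 0 <= c := le_trans (mxnorm_inf_ge0 _) D1_inv_le.
have M_le : M <= Q + c * (P + alpha * M).
  have bound_ge0 : 0 <= Q + c * (P + alpha * M) by rewrite !(addr_ge0, mulr_ge0).
  apply: bigmax_le => // k _; apply: vnorm_inf_le => // a.
  rewrite -(subrK (q a 0) (X _ a 0)) addrC; apply: le_trans (ler_normD _ _) _.
  by rewrite lerD ?le_vnorm_inf ?colloc_sol_shift_le.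
have ca_le1 : 0 <= 1 - c * alpha by rewrite subr_ge0 ltW.
have M_le' : (1 - c * alpha) * M <= c * P + Q.
  rewrite mulrBl mul1r lerBlDr; apply: le_trans M_le _.
  by rewrite mulrDr mulrA addrA [Q + _]addrC.
move=> j; case: (unliftP ord0 j) => [k ->|->].
  apply: le_trans (ler_wpM2l ca_le1 _) M_le'.
  by rewrite /M /interior_norm; apply: le_bigmax.
rewrite X0 -/Q; apply: (@le_trans _ _ Q); last by rewrite lerDr mulr_ge0.
by rewrite ler_piMl // gerBl mulr_ge0.
Qed.

Lemma colloc_sol0_eq0 X : colloc_sol 0 (fun=> 0) X -> forall j, X j = 0.
Proof.
move=> solX j; apply: vnorm_inf_le0.
have := colloc_sol_bound solX j; rewrite blocknorm_inf0 vnorm_inf0 mulr0 addr0.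
by rewrite pmulr_rle0 // subr_gt0.
Qed.

Lemma colloc_sol_unique q p X Y :
  colloc_sol q p X -> colloc_sol q p Y -> forall j, X j = Y j.
Proof.
move=> [X0 resX] [Y0 resY] j.
have solXY : colloc_sol 0 (fun=> 0) (fun j => -1 *: Y j + X j).
  by split=> [|i]; rewrite ?colloc_res_scale_add ?resX ?resY ?X0 ?Y0 scaleN1r addNr.
by apply/eqP; rewrite -subr_eq0 -scaleN1r addrC (colloc_sol0_eq0 solXY j).
Qed.

Definition colloc_map (X : {ffun 'I_N.+1 -> 'cV[R]_n}) : {ffun 'I_N.+1 -> 'cV[R]_n} :=
  [ffun j => oapp (colloc_res X) (X ord0) (unlift ord0 j)].

Fact colloc_map_is_linear : linear colloc_map.
Proof.
move=> k X Y; apply/ffunP => j; rewrite !ffunE; case: (unlift ord0 j) => [i|] //=.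
rewrite -colloc_res_scale_add; apply: eq_colloc_res => j'.
by rewrite ffunE; congr (_ + _); exact: ffunE.
Qed.

HB.instance Definition _ := GRing.isLinear.Build R _ _ _ colloc_map colloc_map_is_linear.

Lemma colloc_sol_exists q p : exists X, colloc_sol q p X.
Proof.
have map_ker0 (Xf : {ffun 'I_N.+1 -> 'cV[R]_n}) : colloc_map Xf = 0 -> Xf = 0.
  move/ffunP=> mapX0; apply/ffunP => j; rewrite ffunE; apply: colloc_sol0_eq0 j.
  split=> [|i]; [have := mapX0 ord0 | have := mapX0 (lift ord0 i)].
    by rewrite !ffunE unlift_none.
  by rewrite !ffunE liftK.
have [Xf /ffunP mapX] := linear_ker0_surj map_ker0 [ffun j => oapp p q (unlift ord0 j)].
exists Xf; split=> [|i]; [have := mapX ord0 | have := mapX (lift ord0 i)].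
  by rewrite !ffunE unlift_none.
by rewrite !ffunE liftK.
Qed.

End Collocation.

Theorem lemma4p1 (R : realFieldType) (N n : nat) (tau : 'I_N.+1 -> R)
    (J : R -> 'M[R]_n) :
  (2 <= N)%N ->
  radau_nodes tau ->
  (* (P1) *)
  radauD1N tau \in unitmx ->
  mxnorm_inf (invmx (radauD1N tau)) <= 2 ->
  (* (A3) *)
  (forall t : R, -1 <= t <= 1 ->
     mxnorm_inf (J t) <= 4^-1 /\ mxnorm_inf (J t)^T <= 4^-1) ->
  forall (q : 'cV[R]_n) (p : 'I_N -> 'cV[R]_n),
  let sol := fun X : 'I_N.+1 -> 'cV[R]_n =>
    X ord0 = q /\
    forall i : 'I_N,
      \sum_(j < N.+1) radauD tau i j *: X j
        - J (tau (lift ord0 i)) *m X (lift ord0 i) = p i in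
  (exists X, sol X) /\
  (forall X Y, sol X -> sol Y -> forall j, X j = Y j) /\
  (forall X, sol X -> forall j : 'I_N.+1,
     vnorm_inf (X j) <= 4 * blocknorm_inf p + 2 * vnorm_inf q).
Proof.
move=> _ nodes D1_unit D1_inv_le A3 q p sol.
have row_sum := radauD_row_sum (radau_nodes_inj nodes).
have A_le i : mxnorm_inf (J (tau (lift ord0 i))) <= 4^-1.
  exact: (A3 _ (radau_node_bounds _ nodes)).1.
have alpha_ge0 : 0 <= 4^-1 :> R by rewrite invr_ge0 ler0n.
have contraction : 2 * 4^-1 < 1 :> R by lra.
pose A i := J (tau (lift ord0 i)).
have solE := colloc_sol_exists (A := A) row_sum D1_unit D1_inv_le A_le alpha_ge0 contraction.
have solU := colloc_sol_unique (A := A) row_sum D1_unit D1_inv_le A_le alpha_ge0 contraction.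
have solB := colloc_sol_bound (A := A) row_sum D1_unit D1_inv_le A_le alpha_ge0 contraction.
split; first exact: solE.
split=> [|X /solB X_le j]; first exact: solU.
by have := X_le j; lra.
Qed.
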